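(* For all level expressions $l_1, l_2, l$ and every natural number $n > 0$: $l_1 \sqcup l \simeq l_2 \sqcup \mathtt{s}^n\,l$ if and only if $l_1 \simeq l_2 \sqcup \mathtt{s}^n\,l$.
   Context: Level expressions are generated by the grammar $l ::= i \mid \mathtt{z} \mid \mathtt{s}\,l \mid l \sqcup l'$, where $i$ ranges over an infinite set $\mathcal{I}$ of level variables. The relation $\simeq$ is the smallest congruence on level expressions (closed under the constructors and under substitution of level expressions for level variables) containing the equations $i_1 \sqcup (i_2 \sqcup i_3) \approx (i_1 \sqcup i_2) \sqcup i_3$, $i_1 \sqcup i_2 \approx i_2 \sqcup i_1$, $\mathtt{s}\,(i_1 \sqcup i_2) \approx \mathtt{s}\,i_1 \sqcup \mathtt{s}\,i_2$, $i \sqcup \mathtt{s}\,i \approx \mathtt{s}\,i$, $i \sqcup \mathtt{z} \approx i$, $i \sqcup i \approx i$. $\mathtt{s}^0\,l = l$, $\mathtt{s}^{n+1}\,l = \mathtt{s}(\mathtt{s}^n\,l)$. *)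

From Stdlib Require Import Arith.

(* Level variables: the infinite set I is taken to be nat. *)
Inductive level : Type :=
| LVar : nat -> level
| LZ : level
| LS : level -> level
| LMax : level -> level -> level.

Fixpoint lsubst (sigma : nat -> level) (l : level) : level :=
  match l with
  | LVar i => sigma i
  | LZ => LZ
  | LS l' => LS (lsubst sigma l')
  | LMax a b => LMax (lsubst sigma a) (lsubst sigma b)
  end.

Fixpoint liter (n : nat) (l : level) : level :=
  match n with
  | 0 => l
  | S n' => LS (liter n' l)
  end.

(* The smallest congruence, closed under the constructors and under
   substitution, containing the six defining equations (stated on
   level variables, as in the paper). *)
Inductive leq_equiv : level -> level -> Prop :=
| le_assoc : forall i1 i2 i3 : nat,
    leq_equiv (LMax (LVar i1) (LMax (LVar i2) (LVar i3)))
              (LMax (LMax (LVar i1) (LVar i2)) (LVar i3))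
| le_comm : forall i1 i2 : nat,
    leq_equiv (LMax (LVar i1) (LVar i2)) (LMax (LVar i2) (LVar i1))
| le_sdist : forall i1 i2 : nat,
    leq_equiv (LS (LMax (LVar i1) (LVar i2))) (LMax (LS (LVar i1)) (LS (LVar i2)))
| le_sabs : forall i : nat,
    leq_equiv (LMax (LVar i) (LS (LVar i))) (LS (LVar i))
| le_zero : forall i : nat,
    leq_equiv (LMax (LVar i) LZ) (LVar i)
| le_idem : forall i : nat,
    leq_equiv (LMax (LVar i) (LVar i)) (LVar i)
| le_refl : forall l, leq_equiv l l
| le_sym : forall l l', leq_equiv l l' -> leq_equiv l' l
| le_trans : forall l1 l2 l3, leq_equiv l1 l2 -> leq_equiv l2 l3 -> leq_equiv l1 l3
| le_S : forall l l', leq_equiv l l' -> leq_equiv (LS l) (LS l')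
| le_Max : forall a a' b b', leq_equiv a a' -> leq_equiv b b' ->
    leq_equiv (LMax a b) (LMax a' b')
| le_subst : forall (sigma : nat -> level) l l',
    leq_equiv l l' -> leq_equiv (lsubst sigma l) (lsubst sigma l').

(* Interpreting levels as natural numbers (variables by a valuation, [z] by 0, [s] by
   successor, [⊔] by [max]) makes [≃] sound and complete: every level is equivalent to
   a finite join of atoms [s^k i] and [s^k z], and a semantic inequality between such
   joins is witnessed atom by atom, by a valuation making the variable of the atom huge.
   The theorem is then a statement about natural numbers: since [n > 0], the equation
   [max x y = max z (n + y)] forces [x = max z (n + y)]. *)
From Stdlib Require Import Setoid Morphisms Arith Lia List.
Import ListNotations.

#[local] Instance leq_equiv_Equivalence : Equivalence leq_equiv.
Proof. split; [exact le_refl | exact le_sym | exact le_trans]. Qed.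

#[local] Instance LS_Proper : Proper (leq_equiv ==> leq_equiv) LS.
Proof. intros ? ? H; now apply le_S. Qed.

#[local] Instance LMax_Proper : Proper (leq_equiv ==> leq_equiv ==> leq_equiv) LMax.
Proof. intros ? ? H ? ? H'; now apply le_Max. Qed.

Definition subst3 (a b c : level) (i : nat) : level :=
  match i with 0 => a | 1 => b | _ => c end.

Lemma lmax_assoc a b c : leq_equiv (LMax a (LMax b c)) (LMax (LMax a b) c).
Proof. exact (le_subst (subst3 a b c) _ _ (le_assoc 0 1 2)). Qed.

Lemma lmax_comm a b : leq_equiv (LMax a b) (LMax b a).
Proof. exact (le_subst (subst3 a b b) _ _ (le_comm 0 1)). Qed.

Lemma LS_lmax a b : leq_equiv (LS (LMax a b)) (LMax (LS a) (LS b)).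
Proof. exact (le_subst (subst3 a b b) _ _ (le_sdist 0 1)). Qed.

Lemma lmax_LS_absorb a : leq_equiv (LMax a (LS a)) (LS a).
Proof. exact (le_subst (subst3 a a a) _ _ (le_sabs 0)). Qed.

Lemma lmax_LZ_r a : leq_equiv (LMax a LZ) a.
Proof. exact (le_subst (subst3 a a a) _ _ (le_zero 0)). Qed.

Lemma lmax_LZ_l a : leq_equiv (LMax LZ a) a.
Proof. rewrite lmax_comm; apply lmax_LZ_r. Qed.

Lemma lmax_idem a : leq_equiv (LMax a a) a.
Proof. exact (le_subst (subst3 a a a) _ _ (le_idem 0)). Qed.

Lemma liter_add k d l : liter (k + d) l = liter k (liter d l).
Proof. induction k; simpl; congruence. Qed.

Lemma lmax_liter_absorb d l : leq_equiv (LMax l (liter d l)) (liter d l).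
Proof.
  induction d as [|d IH]; simpl; [apply lmax_idem|].
  rewrite <- IH at 1.
  rewrite LS_lmax, lmax_assoc, lmax_LS_absorb, <- LS_lmax, IH.
  reflexivity.
Qed.

Lemma liter_lmax_absorb k u v : leq_equiv (LMax u v) v ->
  leq_equiv (LMax (liter k u) (liter k v)) (liter k v).
Proof.
  intros H; induction k as [|k IH]; simpl; [exact H|].
  rewrite <- LS_lmax, IH; reflexivity.
Qed.

Lemma lmax_liter_r d u v : leq_equiv (LMax u v) v ->
  leq_equiv (LMax u (liter d v)) (liter d v).
Proof.
  intros H.
  transitivity (LMax u (LMax v (liter d v))).
  - rewrite lmax_liter_absorb; reflexivity.
  - rewrite lmax_assoc, H; apply lmax_liter_absorb.
Qed.

Fixpoint interp (r : nat -> nat) (l : level) : nat :=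
  match l with
  | LVar i => r i
  | LZ => 0
  | LS l' => S (interp r l')
  | LMax a b => Nat.max (interp r a) (interp r b)
  end.

Lemma interp_lsubst r sigma l :
  interp r (lsubst sigma l) = interp (fun i => interp r (sigma i)) l.
Proof. induction l; simpl; auto. Qed.

Lemma interp_liter r n l : interp r (liter n l) = n + interp r l.
Proof. induction n; simpl; auto. Qed.

Lemma leq_equiv_sound a b : leq_equiv a b -> forall r, interp r a = interp r b.
Proof.
  induction 1; intros r; simpl; try lia.
  - now rewrite IHleq_equiv.
  - now rewrite IHleq_equiv1.
  - now rewrite IHleq_equiv.
  - now rewrite IHleq_equiv1, IHleq_equiv2.
  - now rewrite !interp_lsubst.
Qed.

(* [(Some i, k)] stands for [s^k i] and [(None, k)] for [s^k z]. *)
Definition latom := (option nat * nat)%type.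

Definition atom_level (p : latom) : level :=
  liter (snd p) (match fst p with Some i => LVar i | None => LZ end).

Definition join (A : list latom) : level :=
  fold_right (fun p acc => LMax (atom_level p) acc) LZ A.

Definition atom_succ (p : latom) : latom := (fst p, S (snd p)).

Fixpoint atoms (l : level) : list latom :=
  match l with
  | LVar i => [(Some i, 0)]
  | LZ => [(None, 0)]
  | LS l' => map atom_succ (atoms l')
  | LMax a b => atoms a ++ atoms b
  end.

Lemma join_app A B : leq_equiv (join (A ++ B)) (LMax (join A) (join B)).
Proof.
  induction A as [|a A IH]; simpl; [symmetry; apply lmax_LZ_l|].
  rewrite IH; apply lmax_assoc.
Qed.

(* Nonemptiness matters: [s z] is not equivalent to the empty join [z]. *)
Lemma LS_join A : A <> [] -> leq_equiv (LS (join A)) (join (map atom_succ A)).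
Proof.
  induction A as [|a [|b A] IH]; intros HA; [contradiction| |].
  - simpl; rewrite !lmax_LZ_r; reflexivity.
  - change (leq_equiv (LS (LMax (atom_level a) (join (b :: A))))
                      (LMax (LS (atom_level a)) (join (map atom_succ (b :: A))))).
    rewrite LS_lmax, IH by discriminate; reflexivity.
Qed.

Lemma atoms_neq_nil l : atoms l <> [].
Proof.
  induction l; simpl; try discriminate.
  - now destruct (atoms l).
  - now destruct (atoms l1).
Qed.

Lemma leq_equiv_join_atoms l : leq_equiv l (join (atoms l)).
Proof.
  induction l as [i| |l IH|a IHa b IHb]; simpl.
  - symmetry; apply lmax_LZ_r.
  - symmetry; apply lmax_idem.
  - rewrite IH at 1; apply LS_join, atoms_neq_nil.
  - rewrite join_app, <- IHa, <- IHb; reflexivity.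
Qed.

Definition atom_val (r : nat -> nat) (o : option nat) : nat :=
  match o with Some i => r i | None => 0 end.

Lemma interp_atom r o k : interp r (atom_level (o, k)) = k + atom_val r o.
Proof. unfold atom_level; simpl; rewrite interp_liter; now destruct o. Qed.

Lemma interp_atom_le_join r B b :
  In b B -> interp r (atom_level b) <= interp r (join B).
Proof.
  induction B as [|c B IH]; simpl; intros Hb; [contradiction|].
  destruct Hb as [<-|Hb]; [lia|]. specialize (IH Hb); lia.
Qed.

Lemma interp_join_attained r B : B <> [] ->
  exists b, In b B /\ interp r (join B) = interp r (atom_level b).
Proof.
  induction B as [|c [|d B] IH]; intros HB; [contradiction| |].
  - exists c; simpl; split; [auto | lia].
  - destruct IH as [b [Hb Hmax]]; [discriminate|].
    change (interp r (join (c :: d :: B)))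
      with (Nat.max (interp r (atom_level c)) (interp r (join (d :: B)))).
    destruct (Nat.max_spec (interp r (atom_level c)) (interp r (join (d :: B))))
      as [[_ ->] | [_ ->]].
    + exists b; simpl in *; auto.
    + exists c; simpl; auto.
Qed.

Definition atom_dominated (a b : latom) : Prop :=
  (fst a = None \/ fst a = fst b) /\ snd a <= snd b.

Lemma atom_dominated_absorb a b : atom_dominated a b ->
  leq_equiv (LMax (atom_level a) (atom_level b)) (atom_level b).
Proof.
  destruct a as [oa k], b as [ob m]; intros [Ho Hk]; simpl in *.
  unfold atom_level; simpl.
  replace m with ((m - k) + k) by lia.
  rewrite liter_add; apply lmax_liter_r, liter_lmax_absorb.
  destruct Ho as [->| ->]; [apply lmax_LZ_l | apply lmax_idem].
Qed.

(* For a variable atom [s^k x], valuate [x] above everything else in [B]: the atom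
   of [B] attaining the maximum must then be [s^m x] with [k <= m]. *)
Lemma atom_dominated_witness a B : B <> [] ->
  (forall r, interp r (atom_level a) <= interp r (join B)) ->
  exists b, In b B /\ atom_dominated a b.
Proof.
  intros HB Hle.
  set (r0 := fun _ : nat => 0).
  destruct a as [[x|] k].
  - set (N := S (interp r0 (join B))).
    set (r := fun y => if Nat.eqb y x then N else 0).
    destruct (interp_join_attained r B HB) as [[o m] [Hb Hmax]].
    exists (o, m); split; [exact Hb|].
    assert (Hrx : r x = N) by (unfold r; now rewrite Nat.eqb_refl).
    specialize (Hle r); rewrite Hmax, !interp_atom in Hle; simpl in Hle.
    rewrite Hrx in Hle.
    pose proof (interp_atom_le_join r0 B _ Hb) as Hbound.
    rewrite interp_atom in Hbound.
    destruct o as [y|]; simpl in Hle; [|unfold N in *; lia].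
    destruct (Nat.eqb_spec y x) as [->|Hyx].
    + split; simpl; [now right | lia].
    + assert (r y = 0) by (unfold r; now apply Nat.eqb_neq in Hyx as ->).
      unfold N in *; lia.
  - destruct (interp_join_attained r0 B HB) as [[o m] [Hb Hmax]].
    exists (o, m); split; [exact Hb|].
    specialize (Hle r0); rewrite Hmax, !interp_atom in Hle.
    assert (Hr0 : atom_val r0 o = 0) by now destruct o.
    split; simpl; [now left | lia].
Qed.

Lemma join_absorb_atom a b B : In b B ->
  leq_equiv (LMax a (atom_level b)) (atom_level b) ->
  leq_equiv (LMax a (join B)) (join B).
Proof.
  induction B as [|c B IH]; simpl; intros Hb H; [contradiction|].
  destruct Hb as [->|Hb].
  - rewrite lmax_assoc, H; reflexivity.
  - rewrite lmax_assoc, (lmax_comm a), <- lmax_assoc, IH by assumption.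
    reflexivity.
Qed.

Lemma join_absorb A B : B <> [] ->
  (forall r, interp r (join A) <= interp r (join B)) ->
  leq_equiv (LMax (join A) (join B)) (join B).
Proof.
  intros HB; induction A as [|a A IH]; simpl; intros Hle; [apply lmax_LZ_l|].
  rewrite <- lmax_assoc, IH by (intros r; specialize (Hle r); lia).
  destruct (atom_dominated_witness a B HB) as [b [Hb Hab]];
    [intros r; specialize (Hle r); lia|].
  exact (join_absorb_atom _ _ _ Hb (atom_dominated_absorb _ _ Hab)).
Qed.

Lemma leq_equiv_complete a b :
  (forall r, interp r a = interp r b) -> leq_equiv a b.
Proof.
  intros Hab.
  assert (Hnf : forall l r, interp r (join (atoms l)) = interp r l)
    by (intros l r; symmetry; apply leq_equiv_sound, leq_equiv_join_atoms).
  rewrite (leq_equiv_join_atoms a), (leq_equiv_join_atoms b).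
  rewrite <- (join_absorb (atoms a) (atoms b)), <- (join_absorb (atoms b) (atoms a)) at 1.
  - apply lmax_comm.
  - apply atoms_neq_nil.
  - intros r; rewrite !Hnf, Hab; lia.
  - apply atoms_neq_nil.
  - intros r; rewrite !Hnf, Hab; lia.
Qed.

Lemma leq_equivE a b : leq_equiv a b <-> forall r, interp r a = interp r b.
Proof. split; [apply leq_equiv_sound | apply leq_equiv_complete]. Qed.

Theorem mainTheorem7 : forall (l1 l2 l : level) (n : nat), 0 < n ->
  (leq_equiv (LMax l1 l) (LMax l2 (liter n l)) <->
   leq_equiv l1 (LMax l2 (liter n l))).
Proof.
  intros l1 l2 l n Hn.
  rewrite !leq_equivE.
  split; intros H r; specialize (H r); simpl in *; rewrite interp_liter in *; lia.
Qed.
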